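(* Let $P$ be a poset on $\{1,\ldots,n\}$ and $k$ a field. The ideal $\mathcal{I}_P$ of the ring $R_P$ is a principal ideal if and only if $P$ satisfies the labelled-$\delta$-chain condition. Furthermore, in this case $\mathcal{I}_P$ is generated by $\mathbf{x}^{\delta}$, i.e. $f_{\min}=\delta$, where $f_{\min}\in\mathcal{A}(P)$ is the element with $f_{\min}+\mathcal{A}^{\mathrm{weak}}(P)=\mathcal{A}(P)$.
   Context: All posets are finite, on labels $\{1,\ldots,n\}$. $\mathcal{A}^{\mathrm{weak}}(P)$ is the set of maps $f:\{1,\ldots,n\}\to\mathbb{N}$ with $f(i)\ge f(j)$ whenever $i<_Pj$; $\mathcal{A}(P)\subseteq\mathcal{A}^{\mathrm{weak}}(P)$ consists of those $f$ with additionally $f(i)>f(j)$ whenever $i<_Pj$ and $i>j$ as integers. $R_P\subseteq k[x_1,\ldots,x_n]$ is the span of $\mathbf{x}^f=\prod_ix_i^{f(i)}$, $f\in\mathcal{A}^{\mathrm{weak}}(P)$, and $\mathcal{I}_P$ is the ideal of $R_P$ spanned by $\mathbf{x}^f$, $f\in\mathcal{A}(P)$; $\mathcal{I}_P$ is principal if and only if there is $f_{\min}\in\mathcal{A}(P)$ with $f_{\min}+\mathcal{A}^{\mathrm{weak}}(P)=\mathcal{A}(P)$. A covering relation $i\lessdot_Pj$ is strict if $i>j$ as integers. $\delta(i)$ is the maximum, over all saturated chains in $P_{\ge i}$ starting at $i$, of the number of strict covering relations in the chain. $P$ satisfies the labelled-$\delta$-chain condition if for every $i$, all saturated chains from $i$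 to a maximal element of $P_{\ge i}$ have the same number $\delta(i)$ of strict covering relations. *)

From HB Require Import structures.
From mathcomp Require Import all_boot all_order all_algebra.
From mathcomp Require Import mpoly.
Set Implicit Arguments. Unset Strict Implicit. Unset Printing Implicit Defensive.
Import GRing.Theory.

(* Labels {1,...,n} are represented by 'I_n (label i+1 <-> ordinal i);
   the shift preserves the integer comparison of labels. *)
Section Poset.
Variable n : nat.
Variable le : rel 'I_n.

Definition is_poset : Prop :=
  [/\ reflexive le, antisymmetric le & transitive le].

Definition ltP (i j : 'I_n) : bool := (i != j) && le i j.

Definition coversP (i j : 'I_n) : bool :=
  ltP i j && [forall z, ~~ (ltP i z && ltP z j)].

(* A saturated chain starting at i is i :: s with path coversP i s.
   Number of strict covering relations (c <. c' with c > c' as integers). *)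
Definition nstrict (i : 'I_n) (s : seq 'I_n) : nat :=
  count id (pairmap (fun a b : 'I_n => (b < a)%N) i s).

(* delta(i): maximum over saturated chains starting at i of the number of
   strict covers.  Such chains have at most n elements, so ranging over
   chains with at most n steps covers all of them. *)
Definition delta (i : 'I_n) : nat :=
  \max_(k < n.+1) \max_(t : k.-tuple 'I_n | path coversP i t) nstrict i t.

Definition maximalP (x : 'I_n) : Prop := forall y, le x y -> y = x.

(* labelled-delta-chain condition; maximal elements of P_{>=i} are exactly the
   maximal elements of P lying above i. *)
Definition labelled_delta_chain : Prop :=
  forall (i : 'I_n) (s : seq 'I_n),
    path coversP i s -> maximalP (last i s) -> nstrict i s = delta i.

Definition Aweak (f : 'I_n -> nat) : Prop :=
  forall i j, ltP i j -> (f j <= f i)%N.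

Definition Astrict (f : 'I_n -> nat) : Prop :=
  Aweak f /\ (forall i j, ltP i j -> (j < i)%N -> (f j < f i)%N).

Variable k : fieldType.

Definition inRP (p : {mpoly k[n]}) : Prop :=
  forall m : 'X_{1..n}, m \in msupp p -> Aweak (fun i => m i).

Definition inIP (p : {mpoly k[n]}) : Prop :=
  forall m : 'X_{1..n}, m \in msupp p -> Astrict (fun i => m i).

Definition IP_generated_by (g : {mpoly k[n]}) : Prop :=
  inRP g /\ forall p, inIP p <-> exists2 r, inRP r & p = (g * r)%R.

Definition IP_principal : Prop := exists g, IP_generated_by g.

End Poset.

From Pilot Require Import Defs.
From HB Require Import structures.
From mathcomp Require Import all_boot all_order all_algebra.
From mathcomp Require Import mpoly.
From mathcomp Require Import zify.
(* Re-import, so that [ltP] is the strict order of the poset and not ssrnat's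
   reflection lemma. *)
Import Defs.
Import GRing.Theory.
Set Implicit Arguments. Unset Strict Implicit. Unset Printing Implicit Defensive.

(* Every f in A(P) drops by at least one along each strict cover, so f >= delta
   pointwise, and delta itself lies in A(P).  Principality of I_P amounts to
   A(P) = delta + A^weak(P): the generator must be a monomial, and comparing
   leading monomials of x^delta = g r forces g ~ x^delta.
   Under the chain condition, delta i = nstrict(c) + delta j for any saturated
   chain c from i to j, whence f - delta is weakly decreasing.  Conversely, if
   delta i > delta j + [j < i] for some cover i <. j, the weighted maximum
   [wdelta w] with a large weight at j lies in A(P) and exceeds delta at j by
   more than at i, so it is not of the form delta + A^weak(P).  Having
   delta i = delta j + [j < i] on covers yields the chain condition. *)

Section LabelledPoset.
Variable n : nat.
Variable le : rel 'I_n.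
Hypothesis le_poset : is_poset le.

Let le_refl : reflexive le. Proof. by case: le_poset. Qed.
Let le_anti : antisymmetric le. Proof. by case: le_poset. Qed.
Let le_trans : transitive le. Proof. by case: le_poset. Qed.

Local Notation cpath := (path (coversP le)).

Lemma ltP_le i j : ltP le i j -> le i j.
Proof. by case/andP. Qed.

Lemma ltP_irr : irreflexive (ltP le).
Proof. by move=> i; rewrite /ltP eqxx. Qed.

Lemma ltP_leF i j : ltP le i j -> le j i = false.
Proof.
case/andP=> nij lij; apply/negbTE; apply: contra nij => lji.
by apply/eqP; apply: le_anti; rewrite lij lji.
Qed.

Lemma ltP_trans : transitive (ltP le).
Proof.
move=> j i k lij ljk; rewrite /ltP (le_trans (ltP_le lij) (ltP_le ljk)) andbT.
by apply: contraTneq ljk => <-; rewrite /ltP (ltP_leF lij) andbF.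
Qed.

Lemma coversP_ltP i j : coversP le i j -> ltP le i j.
Proof. by case/andP. Qed.

Lemma cpath_ltP i s : cpath i s -> path (ltP le) i s.
Proof. exact/sub_path/coversP_ltP. Qed.

Lemma cpath_last_ltP i s : cpath i s -> s != [::] -> ltP le i (last i s).
Proof.
move=> /cpath_ltP; rewrite path_sortedE; last exact: ltP_trans.
case/andP=> /allP lt_i _ s0; apply: lt_i.
by case: s s0 => [//|a s] _; rewrite /= mem_last.
Qed.

Lemma cpath_last_le i s : cpath i s -> le i (last i s).
Proof.
by case: s => [|a s] p; [exact: le_refl | exact/ltP_le/(cpath_last_ltP p)].
Qed.

Lemma cpath_size i s : cpath i s -> size s < n.+1.
Proof.
move=> p; have uniq_is : uniq (i :: s).
  by apply: (sorted_uniq ltP_trans ltP_irr); exact: cpath_ltP.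
have := uniq_leq_size uniq_is (fun x _ => mem_enum _ x).
rewrite size_enum_ord /=; lia.
Qed.

Lemma covers_cpath_last i j s : coversP le i j -> cpath i s -> last i s = j -> s = [:: j].
Proof.
case: s => [|a s] cij /=; first by move=> _ eij; rewrite -eij /coversP ltP_irr in cij.
case/andP=> cia pa la.
have aj : a = j.
  apply/eqP; apply: contraT => naj.
  case/andP: cij => _ /forallP /(_ a).
  by rewrite coversP_ltP //= /ltP naj -la (cpath_last_le pa).
case: s pa la => [|b s] pa la; first by rewrite aj.
by have := cpath_last_ltP pa isT; rewrite la aj ltP_irr.
Qed.

Lemma covers_cpath x y : ltP le x y -> exists2 c, cpath x c & last x c = y.
Proof.
suff chain m : forall x y, #|[pred z | le x z && le z y]| <= m -> ltP le x y ->
    exists2 c, cpath x c & last x c = y by exact: chain.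
elim: m => [|m IH] {}x {}y card_xy lxy.
  have : 0 < #|[pred z | le x z && le z y]|.
    by apply/card_gt0P; exists x; rewrite inE le_refl ltP_le.
  by rewrite leqn0 in card_xy; rewrite (eqP card_xy).
have [cxy|] := boolP (coversP le x y); first by exists [:: y]; rewrite //= cxy.
rewrite /coversP lxy /= => /forallPn [z]; rewrite negbK => /andP[lxz lzy].
have [c1 p1 l1] : exists2 c, cpath x c & last x c = z.
  apply: (IH _ _ _ lxz); rewrite -ltnS; apply: leq_trans card_xy; apply/proper_card/properP.
  split; first by apply/subsetP => w; rewrite !inE => /andP[-> /le_trans->] //; exact: ltP_le.
  by exists y; rewrite !inE ?le_refl ?(ltP_le lxy) ?(ltP_leF lzy) ?andbF.
have [c2 p2 l2] : exists2 c, cpath z c & last z c = y.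
  apply: (IH _ _ _ lzy); rewrite -ltnS; apply: leq_trans card_xy; apply/proper_card/properP.
  split; first by apply/subsetP => w; rewrite !inE => /andP[/(le_trans (ltP_le lxz))-> ->].
  by exists x; rewrite !inE ?le_refl ?(ltP_le lxy) ?(ltP_leF lxz).
by exists (c1 ++ c2); rewrite ?cat_path ?last_cat l1 ?p1.
Qed.

Lemma cpath_to_maximal x : exists2 c, cpath x c & maximalP le (last x c).
Proof.
have [y lxy ymin] := arg_minnP (fun y => #|[pred z | le y z]|) (le_refl x).
have maxy : maximalP le y.
  move=> z lyz; apply/eqP; apply: contraT => nzy.
  suff: #|[pred w | le z w]| < #|[pred w | le y w]|.
    by rewrite ltnNge ymin // (le_trans lxy lyz).
  apply/proper_card/properP; split.
    by apply/subsetP => w; rewrite !inE; apply: le_trans.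
  exists y; rewrite !inE ?le_refl //.
  by apply: contra nzy => lzy; apply/eqP; apply: le_anti; rewrite lzy lyz.
have [exy|nxy] := eqVneq x y; first by exists [::]; rewrite //= exy.
have [c pc lc] := covers_cpath (introT andP (conj nxy lxy)).
by exists c; rewrite // lc.
Qed.

Lemma nstrict_cons (i a : 'I_n) s : nstrict i (a :: s) = (a < i) + nstrict a s.
Proof. by []. Qed.

Lemma nstrict_cat (i : 'I_n) c d : nstrict i (c ++ d) = nstrict i c + nstrict (last i c) d.
Proof. by rewrite /nstrict pairmap_cat count_cat. Qed.

Lemma nstrict_gt0 (x : 'I_n) c : last x c < x -> 0 < nstrict x c.
Proof.
elim: c x => [|a c IH] x /=; first by rewrite ltnn.
rewrite nstrict_cons; case: (ltnP a x) => //= lxa lc.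
exact/IH/(leq_trans lc lxa).
Qed.

Definition wdelta (w : 'I_n -> nat) (i : 'I_n) : nat :=
  \max_(k < n.+1) \max_(t : k.-tuple 'I_n | cpath i t) (nstrict i t + w (last i t)).

Lemma delta_wdelta0 i : delta le i = wdelta (fun=> 0) i.
Proof. by apply: eq_bigr => k _; apply: eq_bigr => t _; rewrite addn0. Qed.

Lemma wdelta_ub w i s : cpath i s -> nstrict i s + w (last i s) <= wdelta w i.
Proof.
move=> p; apply: leq_trans (leq_bigmax (Ordinal (cpath_size p))).
exact: (leq_bigmax_cond (F := fun t : (size s).-tuple 'I_n => nstrict i t + w (last i t))
          (in_tuple s) p).
Qed.

Lemma wdelta_attained w i : exists2 s, cpath i s & wdelta w i = nstrict i s + w (last i s).
Proof.
have [k0 Ek] := @eq_bigmax _ (fun k : 'I_n.+1 =>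
   \max_(t : k.-tuple 'I_n | cpath i t) (nstrict i t + w (last i t)))
  (ltac:(by rewrite card_ord)).
have [t0 pt0|no_chain] := pickP (fun t : k0.-tuple 'I_n => cpath i t).
  have [t pt Et] := @eq_bigmax_cond _ (fun t : k0.-tuple 'I_n => cpath i t)
    (fun t => nstrict i t + w (last i t)) (ltac:(by apply/card_gt0P; exists t0)).
  by exists t; last by rewrite /wdelta Ek.
have w0 : wdelta w i = 0 by rewrite /wdelta Ek big_pred0.
by exists [::]; have := wdelta_ub w (i := i) (s := [::]) isT; rewrite w0 //=; lia.
Qed.

Lemma Astrict_cpath f x c :
  Astrict le f -> cpath x c -> f (last x c) + nstrict x c <= f x.
Proof.
case=> fw fs; elim: c x => [|a c IH] x /=; first by rewrite addn0.
case/andP=> cxa pa; have := IH a pa; have := fw _ _ (coversP_ltP cxa).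
rewrite nstrict_cons; case: (ltnP a x) => [ax|_] /=; last by lia.
by have := fs _ _ (coversP_ltP cxa) ax; lia.
Qed.

Lemma delta_le_Astrict f i : Astrict le f -> delta le i <= f i.
Proof.
move=> Af; have [s ps Es] := wdelta_attained (fun=> 0) i.
by rewrite delta_wdelta0 Es addn0; have := Astrict_cpath Af ps; lia.
Qed.

Lemma wdelta_ltP w x y : ltP le x y -> wdelta w y + (y < x) <= wdelta w x.
Proof.
move=> lxy; have [c pc lc] := covers_cpath lxy.
have [s ps Es] := wdelta_attained w y.
have := wdelta_ub w (s := c ++ s) (i := x); rewrite cat_path pc lc ps => /(_ isT).
have : (y < x) <= nstrict x c by case: ltnP => //= yx; apply: nstrict_gt0; rewrite lc.
by rewrite nstrict_cat last_cat lc Es; lia.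
Qed.

Lemma wdelta_Astrict w : Astrict le (wdelta w).
Proof. by split=> i j /(wdelta_ltP w) => [|+ ji]; rewrite ?ji; lia. Qed.

Lemma delta_Astrict : Astrict le (delta le).
Proof.
have [ws ss] := wdelta_Astrict (fun=> 0).
by split=> i j; rewrite !delta_wdelta0; [exact: ws | exact: ss].
Qed.

Lemma Astrict_delta_add f h :
  Aweak le h -> f =1 (fun i => delta le i + h i) -> Astrict le f.
Proof.
move=> hw ef; have [dw ds] := delta_Astrict; split=> i j lij; rewrite !ef.
  exact: leq_add (dw _ _ lij) (hw _ _ lij).
by move=> ji; rewrite -addSn leq_add ?(ds _ _ lij) ?(hw _ _ lij).
Qed.

Definition Astrict_delta_decomp : Prop :=
  forall f, Astrict le f -> exists2 h, Aweak le h & f =1 (fun i => delta le i + h i).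

Section ChainCondition.
Hypothesis chain_cond : labelled_delta_chain le.

Lemma delta_cpath x c : cpath x c -> delta le x = nstrict x c + delta le (last x c).
Proof.
move=> pc; have [d pd md] := cpath_to_maximal (last x c).
have := chain_cond (i := x) (s := c ++ d); rewrite cat_path pc pd last_cat => /(_ isT md).
by rewrite nstrict_cat (chain_cond pd md).
Qed.

Lemma Astrict_delta_decomp_of_chain : Astrict_delta_decomp.
Proof.
move=> f Af; exists (fun i => f i - delta le i); last first.
  by move=> i; have := delta_le_Astrict i Af; lia.
move=> x y lxy; have [c pc lc] := covers_cpath lxy.
have := delta_cpath pc; have := Astrict_cpath Af pc; rewrite lc.
by have := delta_le_Astrict x Af; have := delta_le_Astrict y Af; lia.
Qed.

End ChainCondition.

Lemma labelled_delta_chain_of_covers :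
  (forall i j, coversP le i j -> delta le i = delta le j + (j < i)) ->
  labelled_delta_chain le.
Proof.
move=> dcov i s; elim: s i => [|a s IH] i /= => [_ maxi|/andP[cia ps] maxl].
  rewrite delta_wdelta0; have [[|b s] ps ->] := wdelta_attained (fun=> 0) i; first by [].
  by have := cpath_last_ltP ps isT; rewrite /ltP (maxi _ (cpath_last_le ps)) eqxx.
by rewrite nstrict_cons (IH _ ps maxl) (dcov _ _ cia); lia.
Qed.

Lemma delta_covers_of_decomp :
  Astrict_delta_decomp -> forall i j, coversP le i j -> delta le i = delta le j + (j < i).
Proof.
move=> decomp i j cij; apply/eqP; rewrite eqn_leq.
have -> : delta le j + (j < i) <= delta le i.
  by have := wdelta_ltP (fun=> 0) (coversP_ltP cij); rewrite -!delta_wdelta0.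
rewrite andbT; apply: contraT; rewrite -ltnNge => gap.
pose w z := if z == j then (delta le j).+1 else 0.
have wj : (delta le j).+1 <= wdelta w j.
  by have := wdelta_ub w (i := j) (s := [::]) isT; rewrite /w /= eqxx.
have wi : wdelta w i <= delta le i.
  have [s ps ->] := wdelta_attained w i; rewrite /w /=.
  have [lj|_] := eqVneq (last i s) j; last first.
    by rewrite delta_wdelta0; have := wdelta_ub (fun=> 0) ps.
  by rewrite (covers_cpath_last cij ps lj) /nstrict /=; lia.
have [h hw eh] := decomp _ (wdelta_Astrict w).
by have := hw _ _ (coversP_ltP cij); move: wj wi; rewrite !eh; lia.
Qed.

End LabelledPoset.

Section MonomialIdeal.
Variable n : nat.
Variable le : rel 'I_n.
Hypothesis le_poset : is_poset le.
Variable k : fieldType.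
Local Open Scope ring_scope.

Local Notation mdelta := [multinom delta le i | i < n].
Local Notation Xdelta := ('X_[mdelta] : {mpoly k[n]}).

Lemma inIP_inRP (p : {mpoly k[n]}) : inIP le p -> inRP le p.
Proof. by move=> pI m /pI []. Qed.

Lemma inIP_monomial f : Astrict le f -> inIP le ('X_[[multinom f i | i < n]] : {mpoly k[n]}).
Proof.
move=> [fw fs] m; rewrite msuppX mem_seq1 => /eqP ->.
by split=> i j; rewrite !mnmE; [exact: fw | exact: fs].
Qed.

Lemma IP_generator_msupp (g : {mpoly k[n]}) :
  IP_generated_by le g -> {subset msupp g <= [:: mdelta]}.
Proof.
move=> [_ gI].
have gIP : inIP le g.
  apply/gI; exists 1; last by rewrite mulr1.
  by move=> m; rewrite msupp1 mem_seq1 => /eqP -> i j _; rewrite mnm0E.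
have [r _ er] := (gI Xdelta).1 (inIP_monomial (delta_Astrict le_poset)).
have nzX : Xdelta != 0 by rewrite -msupp_eq0 msuppX.
have nzg : g != 0 by apply: contraNneq nzX => g0; rewrite er g0 mul0r.
have nzr : r != 0 by apply: contraNneq nzX => r0; rewrite er r0 mulr0.
have lead_sum : mdelta = (mlead g + mlead r)%MM by rewrite -mleadM // -er mleadXm.
(* mlead g already lies in A(P), hence above delta: the cofactor r is a constant. *)
have lead_r0 : mlead r = 0%MM.
  apply/mnmP => i; rewrite mnm0E.
  have := delta_le_Astrict le_poset i (gIP _ (mlead_supp nzg)).
  by move/(congr1 (fun m : 'X_{1..n} => m i)): lead_sum; rewrite mnmDE mnmE; lia.
have rC : r = (r@_0)%:MP by apply: msize1_polyC; rewrite -mlead_deg // lead_r0 mdeg0.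
have c0 : r@_0 != 0 by apply: contraNneq nzr => c0; rewrite rC c0.
have -> : g = (r@_0)^-1 *: Xdelta.
  by rewrite er {2}rC mulrC mul_mpolyC scalerA mulVf // scale1r.
by move=> a /msuppZ_le; rewrite msuppX.
Qed.

Lemma Astrict_delta_decomp_of_principal : IP_principal le k -> Astrict_delta_decomp le.
Proof.
move=> [g gen] f Af; pose mf := [multinom f i | i < n].
have [r rR er] := (gen.2 _).1 (inIP_monomial Af).
have : mf \in msupp ('X_[mf] : {mpoly k[n]}) by rewrite msuppX mem_seq1.
rewrite er => /msuppM_le /allpairsP [[a b] /= [ag br emf]].
exists (fun i => b i); first exact: rR.
move: ag => /(IP_generator_msupp gen); rewrite mem_seq1 => /eqP ea.
by move=> i; rewrite -[f i](mnmE f) -/mf emf ea mnmDE mnmE.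
Qed.

Lemma IP_generated_by_delta : Astrict_delta_decomp le -> IP_generated_by le Xdelta.
Proof.
move=> decomp; split; first exact/inIP_inRP/inIP_monomial/delta_Astrict.
move=> p; split=> [pI|[r rR ->] m]; last first.
  move=> /msuppM_le /allpairsP [[a b] /= [+ br ->]].
  rewrite msuppX mem_seq1 => /eqP ->.
  by apply: (Astrict_delta_add le_poset (rR _ br)) => i; rewrite mnmDE mnmE.
have quot u : u \in msupp p -> (mdelta + (u - mdelta))%MM = u.
  move/pI/decomp => [h _ eh]; apply/mnmP => i.
  by rewrite mnmDE mnmBE mnmE eh; lia.
exists (\sum_(u <- msupp p) p@_u *: 'X_[u - mdelta]).
  move=> m /msupp_sum_le /flattenP [s /mapP [u]]; rewrite filter_predT => up -> ms.
  move: (msuppZ_le ms); rewrite msuppX mem_seq1 => /eqP ->.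
  have [h hw eh] := decomp _ (pI _ up).
  by move=> i j lij; rewrite !mnmBE !mnmE !eh; have := hw _ _ lij; lia.
rewrite mulr_sumr [LHS]mpolyE; apply: eq_big_seq => u up.
by rewrite -scalerAr -mpolyXD quot.
Qed.

End MonomialIdeal.

Theorem proposition9p5 (n : nat) (le : rel 'I_n) (k : fieldType) :
  is_poset le ->
  (IP_principal le k <-> labelled_delta_chain le) /\
  (labelled_delta_chain le ->
     @IP_generated_by n le k 'X_[[multinom delta le i | i < n]] /\
     Astrict le (delta le) /\
     (forall f, Astrict le f <-> exists2 h, Aweak le h & f =1 (fun i => delta le i + h i)%N)).
Proof.
move=> poset.
have gen_delta chain :=
  IP_generated_by_delta poset k (Astrict_delta_decomp_of_chain poset chain).
split.
  split=> [principal | chain]; last by eexists; exact: gen_delta.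
  apply: (labelled_delta_chain_of_covers poset).
  exact: (delta_covers_of_decomp poset (Astrict_delta_decomp_of_principal poset principal)).
move=> chain; split; first exact: gen_delta.
split=> [|f]; first exact: delta_Astrict.
split; first exact: Astrict_delta_decomp_of_chain.
by case=> h hw; apply: Astrict_delta_add.
Qed.
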